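(* For nonnegative integers $s_1,s_2$, let $N(s_1,s_2)$ be the number of $(x_1,x_2,x_3,x_4)\in\mathbb Z_{\ge0}^4$ with $x_1+2x_2+x_3=s_1$ and $x_1+x_2+x_4=s_2$ (the vector partition function of $\begin{pmatrix}1&2&1&0\\1&1&0&1\end{pmatrix}$). For $\boldsymbol\alpha=(\alpha_1,\alpha_2)\in\mathbb C^2$ with $(\alpha_1+\alpha_2)(2\alpha_1+\alpha_2)\ne0$ define $$W(\mathbf s;\boldsymbol\alpha)=\frac{\alpha_1^2\,A+2\alpha_1\alpha_2\,B+\alpha_2^2\,C}{2(\alpha_1+\alpha_2)(2\alpha_1+\alpha_2)},$$ where $A=s_1^2+4s_1+\tfrac72+\tfrac12(-1)^{s_1}$, $B=s_1s_2+\tfrac32s_1+2s_2+\tfrac{11}4+\tfrac14(-1)^{s_1}$, $C=s_2^2+3s_2+2$. Then: (i) if $s_1\le s_2$, $N(s_1,s_2)=W(\mathbf s;(1,0))=\frac{s_1^2}{4}+s_1+\frac{7+(-1)^{s_1}}{8}$; (ii) if $s_1/2-1\le s_2\le s_1+1$, $N(s_1,s_2)=\operatorname{Re}W(\mathbf s;(1,-1\pm i))=s_1s_2-\frac{s_1^2+2s_2^2}{4}+\frac{s_1+s_2}{2}+\frac{7+(-1)^{s_1}}{8}$; (iii) if $s_2\le s_1/2$, $N(s_1,s_2)=W(\mathbf s;(0,1))=\frac{s_2^2}{2}+\frac{3s_2}{2}+1$. *)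

From HB Require Import structures.
From mathcomp Require Import all_boot all_order all_algebra all_field.
Set Implicit Arguments. Unset Strict Implicit. Unset Printing Implicit Defensive.
Import Order.TTheory GRing.Theory Num.Theory.
Local Open Scope ring_scope.

(* The ranges x1,x2,x3 <= s1 and x4 <= s2 are forced by the first/second
   equation, so the finite sum counts exactly all solutions. *)
Definition Npart (s1 s2 : nat) : nat :=
  (\sum_(x1 < s1.+1) \sum_(x2 < s1.+1) \sum_(x3 < s1.+1) \sum_(x4 < s2.+1)
     ((x1 + 2 * x2 + x3 == s1) && (x1 + x2 + x4 == s2) : nat))%N.

Definition WA (s1 : nat) : algC :=
  s1%:R ^+ 2 + 4 * s1%:R + 7 / 2 + (1 / 2) * (-1) ^+ s1.
Definition WB (s1 s2 : nat) : algC :=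
  s1%:R * s2%:R + (3 / 2) * s1%:R + 2 * s2%:R + 11 / 4 + (1 / 4) * (-1) ^+ s1.
Definition WC (s2 : nat) : algC := s2%:R ^+ 2 + 3 * s2%:R + 2.

(* W(s; alpha); meaningful when (a1 + a2)(2 a1 + a2) != 0. *)
Definition W (s1 s2 : nat) (a1 a2 : algC) : algC :=
  (a1 ^+ 2 * WA s1 + 2 * a1 * a2 * WB s1 s2 + a2 ^+ 2 * WC s2)
  / (2 * (a1 + a2) * (2 * a1 + a2)).

From HB Require Import structures.
From mathcomp Require Import all_boot all_order all_algebra all_field.
From mathcomp Require Import zify ring.
Import Order.TTheory GRing.Theory Num.Theory.

(* Eliminating the slack variables x3 and x4 turns N(s1, s2) into the number
   of lattice points (x1, x2) with x1 + 2 x2 <= s1 and x1 + x2 <= s2.  Removing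
   the row x2 = 0 and shifting the rest down gives
   N(s1 + 2, s2 + 1) = N(s1, s2) + min(s1 + 2, s2 + 1) + 1, a step that stays
   inside each of the three chambers, so each counting formula follows by
   induction from its boundary values.  The evaluations of W are field
   identities; at alpha = (1, -1 +- i) the denominator is 2(+-i - 1), and
   multiplying through by its conjugate separates the real part. *)

Lemma big_ord_widen_idx (R : Type) (idx : R) (op : Monoid.law idx) n m
    (F : nat -> R) :
  n <= m -> (forall i, n <= i < m -> F i = idx) ->
  \big[op/idx]_(i < m) F i = \big[op/idx]_(i < n) F i.
Proof.
move=> le_nm F_idx; rewrite (big_ord_widen _ _ le_nm) [RHS]big_mkcond.
apply: eq_bigr => i _; case: ifPn => // /negbTE lt_in.
by rewrite F_idx // ltn_ord leqNgt lt_in.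
Qed.

Lemma sum_ord_leq c b : c < b -> \sum_(i < b) (i <= c : nat) = c.+1.
Proof.
move=> lt_cb.
rewrite (@big_ord_widen_idx _ _ addn c.+1 b (fun i => (i <= c : nat))) //;
  last first.
  by move=> i /andP[lt_ci _]; rewrite leqNgt lt_ci.
rewrite (eq_bigr (fun=> 1%N)) => [|i _]; last by rewrite -ltnS ltn_ord.
by rewrite sum1_card card_ord.
Qed.

Lemma sum_ord_addn_eq m n : \sum_(x < n.+1) (m + x == n : nat) = (m <= n).
Proof.
case: (leqP m n) => [le_mn | lt_nm]; last first.
  by rewrite big1 // => x _; rewrite (_ : (m + x == n) = false) //; lia.
have lt_d : n - m < n.+1 by lia.
rewrite (bigD1 (Ordinal lt_d)) //= big1 => [|x ne_x]; first by rewrite subnKC // eqxx.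
rewrite (_ : (m + x == n) = false) //; apply/negbTE/eqP => def_n.
by move/eqP: ne_x; apply; apply: val_inj => /=; lia.
Qed.

Definition Nbox (b1 b2 s1 s2 : nat) : nat :=
  \sum_(x1 < b1) \sum_(x2 < b2) ((x1 + 2 * x2 <= s1) && (x1 + x2 <= s2) : nat).

Lemma Npart_Nbox s1 s2 : Npart s1 s2 = Nbox s1.+1 s1.+1 s1 s2.
Proof.
rewrite /Npart /Nbox; apply: eq_bigr => x1 _; apply: eq_bigr => x2 _.
under eq_bigr do under eq_bigr do rewrite -mulnb.
under eq_bigr do rewrite -big_distrr /=.
by rewrite -big_distrl /= -mulnb !sum_ord_addn_eq.
Qed.

Lemma Nbox_widen b1 b2 c1 c2 s1 s2 :
  minn s1 s2 < b1 <= c1 -> minn s1 s2 < b2 <= c2 ->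
  Nbox c1 c2 s1 s2 = Nbox b1 b2 s1 s2.
Proof.
move=> /andP[lt_b1 le_c1] /andP[lt_b2 le_c2]; rewrite /Nbox.
pose pt x1 x2 := ((x1 + 2 * x2 <= s1) && (x1 + x2 <= s2) : nat).
rewrite (@big_ord_widen_idx _ _ addn b1 c1 (fun x1 => \sum_(x2 < c2) pt x1 x2))
  // => [|x1 /andP[le_x1 _]]; last first.
  by apply: big1 => x2 _; rewrite /pt (_ : (_ && _) = false) //; lia.
apply: eq_bigr => x1 _; apply: (@big_ord_widen_idx _ _ addn b2 c2 (pt x1)) => //.
by move=> x2 /andP[le_x2 _]; rewrite /pt (_ : (_ && _) = false) //; lia.
Qed.

Lemma Npart0l s2 : Npart 0 s2 = 1.
Proof. by rewrite Npart_Nbox /Nbox !big_ord1. Qed.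

Lemma Npart0r s1 : Npart s1 0 = 1.
Proof.
rewrite Npart_Nbox (@Nbox_widen 1 1) ?minn0 //.
by rewrite /Nbox !big_ord1.
Qed.

Lemma Npart1S s2 : Npart 1 s2.+1 = 2.
Proof. by rewrite Npart_Nbox /Nbox !big_ord_recl !big_ord0. Qed.

(* Points with x2 > 0 are the points of the (s1, s2) problem shifted by
   (0, 1); those with x2 = 0 are 0 <= x1 <= min(s1 + 2, s2 + 1). *)
Lemma NpartSS s1 s2 : Npart s1.+2 s2.+1 = Npart s1 s2 + (minn s1.+2 s2.+1).+1.
Proof.
rewrite !Npart_Nbox -(@Nbox_widen s1.+1 s1.+1 s1.+3 s1.+2); [|lia|lia].
rewrite /Nbox; under eq_bigr do rewrite big_ord_recl.
rewrite big_split /= addnC; congr (_ + _).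
  apply: eq_bigr => x1 _; apply: eq_bigr => x2 _ /=.
  by congr (nat_of_bool _); apply/idP/idP; rewrite /bump /=; lia.
rewrite -(@sum_ord_leq (minn s1.+2 s2.+1) s1.+3); last by lia.
by apply: eq_bigr => x1 _ /=; congr (nat_of_bool _); apply/idP/idP; lia.
Qed.

Local Open Scope ring_scope.

Section ClosedForms.

Variable R : numFieldType.

Lemma Npart_chamberI s1 s2 : (s1 <= s2)%N ->
  (Npart s1 s2)%:R = s1%:R ^+ 2 / 4 + s1%:R + (7 + (-1) ^+ s1) / 8 :> R.
Proof.
elim/ltn_ind: s1 s2 => -[|[|s1]] IH s2 le_s12.
- by rewrite Npart0l expr0; field.
- by case: s2 le_s12 => // s2 _; rewrite Npart1S expr1; field.
- case: s2 le_s12 => // s2 le_s12.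
  rewrite NpartSS natrD (IH s1) //; last by lia.
  by rewrite (minn_idPl _) // !exprS; field.
Qed.

Lemma Npart_chamberIII s1 s2 : (2 * s2 <= s1)%N ->
  (Npart s1 s2)%:R = s2%:R ^+ 2 / 2 + 3 * s2%:R / 2 + 1 :> R.
Proof.
elim: s2 s1 => [|s2 IH] s1 le_s21; first by rewrite Npart0r; field.
case: s1 le_s21 => [|[|s1]] le_s21; try lia.
rewrite NpartSS natrD (IH s1); last by lia.
by rewrite (minn_idPr _); [field | lia].
Qed.

Lemma Npart_chamberII s1 s2 : (s1 <= 2 * s2 + 2)%N -> (s2 <= s1.+1)%N ->
  (Npart s1 s2)%:R = s1%:R * s2%:R - (s1%:R ^+ 2 + 2 * s2%:R ^+ 2) / 4
       + (s1%:R + s2%:R) / 2 + (7 + (-1) ^+ s1) / 8 :> R.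
Proof.
elim: s2 s1 => [|s2 IH] s1 le_s12 le_s21.
  rewrite Npart0r; case: s1 le_s12 le_s21 => [|[|[|s1]]] // _ _.
  - by rewrite expr0; field.
  - by rewrite expr1; field.
  - by rewrite !exprS expr0; field.
have [le_s1S|lt_Ss1] := leqP s1 s2.+1.
  rewrite Npart_chamberI //.
  have [->|->] : s1 = s2.+1 \/ s1 = s2 by lia.
  - by rewrite !exprS; field.
  - by field.
case: s1 le_s12 le_s21 lt_Ss1 => [|[|s1]] // le_s12 le_s21 lt_Ss1.
rewrite NpartSS natrD (IH s1); [|lia|lia].
by rewrite (minn_idPr _); [rewrite !exprS; field | lia].
Qed.

Lemma ler_nat_half m n : (n%:R <= m%:R / 2 :> R) = (2 * n <= m)%N.
Proof. by rewrite ler_pdivlMr // -[2 : R]/(2%:R) -natrM mulnC ler_nat. Qed.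

Lemma ler_nat_half_sub1 m n : (m%:R / 2 - 1 <= n%:R :> R) = (m <= 2 * n + 2)%N.
Proof.
rewrite lerBlDr ler_pdivrMr // -[2 : R]/(2%:R) -[1 : R]/(1%:R) -natrD -natrM.
by rewrite ler_nat; apply/idP/idP; lia.
Qed.

End ClosedForms.

Lemma W_1_0 s1 s2 : W s1 s2 1 0 = s1%:R ^+ 2 / 4 + s1%:R + (7 + (-1) ^+ s1) / 8.
Proof. by rewrite /W /WA /WB /WC; field. Qed.

Lemma W_0_1 s1 s2 : W s1 s2 0 1 = s2%:R ^+ 2 / 2 + 3 * s2%:R / 2 + 1.
Proof. by rewrite /W /WA /WB /WC; field. Qed.

Lemma quad_ratio_rect (F : numFieldType) (A B C j : F) : j ^+ 2 = -1 ->
  (1 ^+ 2 * A + 2 * 1 * (-1 + j) * B + (-1 + j) ^+ 2 * C)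
    / (2 * (1 + (-1 + j)) * (2 * 1 + (-1 + j)))
  = (- A / 4 + B - C / 2) + j * (- A / 4 + C / 2).
Proof.
move=> sqj.
have mod_sqj (P Q K : F) : P = Q + K * (j ^+ 2 + 1) -> P = Q.
  by rewrite sqj addNr mulr0 addr0.
have -> : 2 * (1 + (-1 + j)) * (2 * 1 + (-1 + j)) = 2 * (j - 1).
  by apply: (mod_sqj _ _ 2); ring.
have two_neq0 : 2 != 0 :> F by rewrite -[2 : F]/(2%:R) pnatr_eq0.
have j_neq1 : j - 1 != 0.
  rewrite subr_eq0; apply: contra_eqN sqj => /eqP ->.
  by rewrite expr1n -subr_eq0 opprK.
apply: (mulIf (mulf_neq0 two_neq0 j_neq1)); rewrite mulfVK ?mulf_neq0 //.
by apply: (mod_sqj _ _ (A / 2)); field.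
Qed.

Lemma Re_W_rect s1 s2 (j : algC) : j = 'i \/ j = - 'i ->
  'Re (W s1 s2 1 (-1 + j)) = - WA s1 / 4 + WB s1 s2 - WC s2 / 2.
Proof.
have rY : - WA s1 / 4 + WC s2 / 2 \is Num.real.
  by rewrite /WA /WC ?(rpredD, rpredM, rpredX, rpredN, rpredV, realn, rpred1).
have rX : - WA s1 / 4 + WB s1 s2 - WC s2 / 2 \is Num.real.
  by rewrite /WA /WB /WC ?(rpredD, rpredM, rpredX, rpredN, rpredV, realn, rpred1).
case=> ->.
- by rewrite /W quad_ratio_rect ?sqrCi // Re_rect.
- by rewrite /W quad_ratio_rect ?sqrrN ?sqrCi // (mulNr 'i) -mulrN Re_rect ?rpredN.
Qed.

Theorem mainTheorem6 (s1 s2 : nat) :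
  ((s1 <= s2)%N ->
     (Npart s1 s2)%:R = W s1 s2 1 0 /\
     W s1 s2 1 0 = s1%:R ^+ 2 / 4 + s1%:R + (7 + (-1) ^+ s1) / 8)
  /\
  (s1%:R / 2 - 1 <= s2%:R :> algC -> (s2 <= s1.+1)%N ->
     (Npart s1 s2)%:R = 'Re (W s1 s2 1 (-1 + 'i)) /\
     (Npart s1 s2)%:R = 'Re (W s1 s2 1 (-1 - 'i)) /\
     'Re (W s1 s2 1 (-1 + 'i)) =
       s1%:R * s2%:R - (s1%:R ^+ 2 + 2 * s2%:R ^+ 2) / 4
       + (s1%:R + s2%:R) / 2 + (7 + (-1) ^+ s1) / 8)
  /\
  (s2%:R <= s1%:R / 2 :> algC ->
     (Npart s1 s2)%:R = W s1 s2 0 1 /\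
     W s1 s2 0 1 = s2%:R ^+ 2 / 2 + 3 * s2%:R / 2 + 1).
Proof.
split; [|split].
- by move=> le_s12; rewrite W_1_0 Npart_chamberI.
- rewrite ler_nat_half_sub1 => le_s12 le_s21.
  have Re_W j : j = 'i \/ j = - 'i -> 'Re (W s1 s2 1 (-1 + j)) =
      s1%:R * s2%:R - (s1%:R ^+ 2 + 2 * s2%:R ^+ 2) / 4
      + (s1%:R + s2%:R) / 2 + (7 + (-1) ^+ s1) / 8.
    by move=> ij; rewrite Re_W_rect // /WA /WB /WC; field.
  by rewrite !Re_W ?Npart_chamberII; auto.
- by rewrite ler_nat_half => le_s21; rewrite W_0_1 Npart_chamberIII.
Qed.
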